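(* Let $R$ be a skew invertible R-matrix on $V\otimes V$. Define $J_1=I$, $J_{k+1}=R_kJ_kR_k$ and $\Upsilon^{(1)}_R=1$, $\Upsilon^{(k+1)}_R=(R_1R_2\cdots R_k)\Upsilon^{(k)}_R$ for $k\ge1$. Then for every $i\ge1$, $$\mathrm{Tr}_{R(i+1,\dots,2i)}\,\Upsilon^{(2i)}_R=\bigl(\Upsilon^{(i)}_R\bigr)^4=\bigl(J_1J_2\cdots J_i\bigr)^2 .$$
   Context: $V$ is a finite-dimensional complex vector space, $I=\mathrm{id}_V$, $P$ the flip. For an operator $X$ on $V\otimes V$, $X_k$ acts in tensor factors $k,k+1$ of $V^{\otimes m}$ and $X_{kl}$ in factors $k,l$. An R-matrix is an invertible $R$ with $R_1R_2R_1=R_2R_1R_2$; it is skew invertible if there is $\Psi$ with $\mathrm{Tr}_{(2)}(R_{12}\Psi_{23})=\mathrm{Tr}_{(2)}(\Psi_{12}R_{23})=P_{13}$ ($\mathrm{Tr}_{(k)}$ = partial trace over factor $k$). Then $(D_R)_1:=\mathrm{Tr}_{(2)}\Psi_{12}$ and the R-trace over factor $k$ is $\mathrm{Tr}_{R(k)}(Y)=\mathrm{Tr}_{(k)}((D_R)_kY)$; $\mathrm{Tr}_{R(k,\dots,l)}$ is the composition over factors $k,\dots,l$. *)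

From HB Require Import structures.
From mathcomp Require Import all_boot all_order all_algebra.
From mathcomp Require Import reals complex.
Set Implicit Arguments. Unset Strict Implicit. Unset Printing Implicit Defensive.
Import Order.TTheory GRing.Theory Num.Theory.
Local Open Scope ring_scope.

(* V = C^n with C = R[i] (R a real type), so C is the field of complex
   numbers.  Basis vectors of V^{(x)m} are indexed by multi-indices
   idx n m = {ffun 'I_m -> 'I_n}; tensor factor number a+1 (1-based, as in
   the paper) is the coordinate a : 'I_m (0-based).  An operator on V^{(x)m}
   is given by its matrix kernel in the tensor-product basis. *)

Section Ops.
Variable R : realType.
Local Notation C := (R[i]).
Variable n : nat.

Definition idx (m : nat) := {ffun 'I_m -> 'I_n}.
Definition op (m : nat) := idx m -> idx m -> C.

Definition op1 m : op m := fun i j => (i == j)%:R.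
Definition op0 m : op m := fun _ _ => 0.
Definition opmul m (X Y : op m) : op m := fun i j => \sum_(k : idx m) X i k * Y k j.

Definition flip : op 2 := fun i j => ((i ord0 == j (@Ordinal 2 1 isT)) &&
                                       (i (@Ordinal 2 1 isT) == j ord0))%:R.

(* X_{ab} : X : op 2 acting in the factors a, b (a <> b) of V^{(x)m} *)
Definition pair_idx m (i : idx m) (a b : 'I_m) : idx 2 :=
  [ffun t : 'I_2 => if val t == 0%N then i a else i b].
Definition embed2 m (X : op 2) (a b : 'I_m) : op m := fun i j =>
  X (pair_idx i a b) (pair_idx j a b) *
  [forall c : 'I_m, (c != a) ==> (c != b) ==> (i c == j c)]%:R.
(* same with positions given as (0-based) naturals; 0 if out of range *)
Definition embedN m (X : op 2) (a b : nat) : op m :=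
  match (insub a : option 'I_m), (insub b : option 'I_m) with
  | Some a', Some b' => embed2 X a' b'
  | _, _ => fun _ _ => 0
  end.

Definition embed1 m (Y : op 1) (a : 'I_m) : op m := fun i j =>
  Y [ffun _ => i a] [ffun _ => j a] *
  [forall c : 'I_m, (c != a) ==> (i c == j c)]%:R.

Definition ins m (a : 'I_m.+1) (i : idx m) (l : 'I_n) : idx m.+1 :=
  [ffun c => if unlift a c is Some c' then i c' else l].

Definition ptr m (a : 'I_m.+1) (Y : op m.+1) : op m := fun i j =>
  \sum_(l : 'I_n) Y (ins a i l) (ins a j l).

End Ops.
Arguments op1 {R n m}.
Arguments op0 {R n m}.
Arguments flip {R n}.

Section RMatrix.
Local Unset Implicit Arguments.
Variable R : realType.
Variable n : nat.
Local Notation op := (op R n).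

Definition o01 : 'I_2 := @Ordinal 2 1 isT.   (* factor 2 of V(x)V *)
Definition o13 : 'I_3 := @Ordinal 3 1 isT.   (* factor 2 of V(x)V(x)V *)

Definition is_Rmatrix (Rm : op 2) : Prop :=
  (exists Rinv : op 2, opmul Rm Rinv = op1 /\ opmul Rinv Rm = op1) /\
  opmul (embedN Rm 0 1) (opmul (@embedN R n 3 Rm 1 2) (embedN Rm 0 1)) =
  opmul (embedN Rm 1 2) (opmul (@embedN R n 3 Rm 0 1) (embedN Rm 1 2)).

Definition skew_inverse (Rm Psi : op 2) : Prop :=
  ptr o13 (opmul (@embedN R n 3 Rm 0 1) (embedN Psi 1 2)) = flip /\
  ptr o13 (opmul (@embedN R n 3 Psi 0 1) (embedN Rm 1 2)) = flip.

Definition DR (Psi : op 2) : op 1 := ptr o01 Psi.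

Definition rtr_last (D : op 1) m (Y : op m.+1) : op m :=
  ptr ord_max (opmul (embed1 D ord_max) Y).

(* Tr_{R(m+1,...,m+k)} on V^{(x)(k+m)}: R-traces over the last k factors *)
Fixpoint rtrs (D : op 1) (m k : nat) : op (k + m) -> op m :=
  match k return op (k + m) -> op m with
  | 0 => fun Y => Y
  | k'.+1 => fun Y => rtrs D m k' (rtr_last D (k' + m) Y)
  end.

(* R_k (paper, k >= 1) acting in factors k, k+1 of V^{(x)m} *)
Definition Rk (Rm : op 2) m (k : nat) : op m := embedN Rm k.-1 k.

Fixpoint Jop (Rm : op 2) m (k : nat) : op m :=
  match k with
  | 0 => op1
  | 1 => op1
  | (k'.+1 as p).+1 => opmul (Rk Rm m p) (opmul (Jop Rm m p) (Rk Rm m p))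
  end.

Fixpoint Ups (Rm : op 2) m (k : nat) : op m :=
  match k with
  | 0 => op1
  | 1 => op1
  | (k'.+1 as p).+1 => opmul (\big[@opmul R n m / op1]_(1 <= j < p.+1) Rk Rm m j)
                   (Ups Rm m p)
  end.

Definition Jprod (Rm : op 2) m (k : nat) : op m :=
  \big[@opmul R n m / op1]_(1 <= j < k.+1) Jop Rm m j.

End RMatrix.
Arguments is_Rmatrix {R n}.
Arguments skew_inverse {R n}.
Arguments DR {R n}.
Arguments rtr_last {R n}.
Arguments rtrs {R n}.
Arguments Rk {R n}.
Arguments Jop {R n}.
Arguments Ups {R n}.
Arguments Jprod {R n}.

From HB Require Import structures.
From mathcomp Require Import all_boot all_algebra zify.
From mathcomp Require Import boolp reals complex.
From Stdlib Require Import Setoid Morphisms.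
Set Implicit Arguments. Unset Strict Implicit. Unset Printing Implicit Defensive.

(* Upsilon^(m) is the half twist Delta_m of the braid group B_m (letter j standing for R_j):
   it conjugates R_j into R_(m-j), its square is J_1 ... J_m and also equals
   (R_(m-1) ... R_1)^m.  Put W(m, p) = Delta_p Delta_m (R_(m-1) ... R_1)^p.  Braid
   relations rewrite W(m+1, p) as X R_m Y with X, Y in B_m and X Y = W(m, p+1), while
   Tr_R(m+1) (X R_m Y) = X Y because skew invertibility gives Tr_R(2) R_12 = I.
   Hence i R-traces turn Upsilon^(2i) = W(2i, 0) into W(i, i) = (Upsilon^(i))^4. *)

(* A word [:: j1; ...; jk] stands for R_j1 ... R_jk; braid_eq is the congruence
   generated by the braid relations. *)
Inductive braid_eq : seq nat -> seq nat -> Prop :=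
| braid_refl w : braid_eq w w
| braid_sym u v : braid_eq u v -> braid_eq v u
| braid_trans u v w : braid_eq u v -> braid_eq v w -> braid_eq u w
| braid_cat u u' v v' : braid_eq u u' -> braid_eq v v' -> braid_eq (u ++ v) (u' ++ v')
| braid_rel j : 0 < j -> braid_eq [:: j; j.+1; j] [:: j.+1; j; j.+1]
| braid_far a b : 0 < a -> a.+1 < b -> braid_eq [:: a; b] [:: b; a].

#[local] Hint Resolve braid_refl : core.

#[export] Instance braid_eq_Equivalence : Equivalence braid_eq.
Proof. split; [exact: braid_refl | exact: braid_sym | exact: braid_trans]. Qed.

#[export] Instance cat_braid_eq : Proper (braid_eq ==> braid_eq ==> braid_eq) (@cat nat).
Proof. by move=> u u' Hu v v' Hv; apply: braid_cat. Qed.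

#[export] Instance cons_braid_eq g : Proper (braid_eq ==> braid_eq) (cons g).
Proof. by move=> v v' Hv; apply: (@braid_cat [:: g] [:: g]). Qed.

Definition far j g := (0 < g) && ((g.+1 < j) || (j.+1 < g)).
Definition is_gen m g := (0 < g) && (g < m).

Lemma braid_commute j w : 0 < j -> all (far j) w -> braid_eq (w ++ [:: j]) (j :: w).
Proof.
move=> j0; elim: w => [|g w IH] //= /andP[/andP[g0 /orP gj] /IH Hw].
rewrite Hw; apply: (@braid_cat [:: g; j] [:: j; g]) => //.
by case: gj => gj; [|apply: braid_sym]; apply: braid_far.
Qed.

Lemma braid_conj (u : seq nat) (f : nat -> nat) (P : pred nat) w :
    (forall g, P g -> braid_eq (u ++ [:: g]) (f g :: u)) -> all P w ->
  braid_eq (u ++ w) (map f w ++ u).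
Proof.
move=> Hu; elim: w => [|g w IH] /=; first by rewrite cats0.
case/andP=> /Hu Hg /IH Hw.
by rewrite -cat1s catA Hg /= Hw.
Qed.

Lemma all_is_gen_le a b w : a <= b -> all (is_gen a) w -> all (is_gen b) w.
Proof. by move=> ab; apply: sub_all => g /andP[g0 ga]; apply/andP; split; lia. Qed.

Lemma all_iota_is_gen a k m : 0 < a -> a + k <= m -> all (is_gen m) (iota a k).
Proof. by move=> a0 akm; apply/allP => g; rewrite mem_iota => /andP ?; apply/andP; lia. Qed.

Lemma all_far_is_gen j m w : all (is_gen m) w -> m < j -> all (far j) w.
Proof. by move=> + mj; apply: sub_all => g /andP[g0 gm]; apply/andP; lia. Qed.

Definition asc m := iota 1 m.

Fixpoint desc m :=
  match m with 0 | 1 => [::] | (p.+1 as m').+1 => m' :: desc m' end.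

Fixpoint half_twist m := if m is p.+1 then asc p ++ half_twist p else [::].

Lemma iota_rcons a k : iota a k.+1 = iota a k ++ [:: a + k].
Proof. by rewrite -[k.+1]addn1 iotaD. Qed.

Lemma ascS m : asc m.+1 = asc m ++ [:: m.+1].
Proof. by rewrite /asc iota_rcons add1n. Qed.

Lemma descS m : 0 < m -> desc m.+1 = m :: desc m.
Proof. by case: m. Qed.

Lemma all_desc m : all (is_gen m) (desc m).
Proof.
elim: m => [|[|m] IH] //; rewrite descS //=.
by rewrite /is_gen ltnSn; apply: all_is_gen_le IH.
Qed.

Lemma all_half_twist m : all (is_gen m) (half_twist m).
Proof.
elim: m => [|m IH] //=; rewrite all_cat all_iota_is_gen //.
exact: all_is_gen_le IH.
Qed.

Lemma asc_shift m j : 0 < j < m -> braid_eq (asc m ++ [:: j]) (j.+1 :: asc m).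
Proof.
elim: m j => [|m IH] j /andP[j0 jm] //; rewrite ascS.
have [jlt|jeq] : j < m \/ j = m by lia.
  have swap : braid_eq ([:: m.+1] ++ [:: j]) ([:: j] ++ [:: m.+1]).
    by apply/braid_sym/braid_far.
  by rewrite -catA swap catA IH ?j0.
subst j; case: m {IH jm} j0 => [|p] // _; rewrite ascS -!catA /= braid_rel //.
have far_asc : all (far p.+2) (asc p).
  by apply: (@all_far_is_gen _ p.+1); first exact: all_iota_is_gen.
by rewrite -[[:: p.+2; _; _]]cat1s catA braid_commute // ascS ascS -!catA.
Qed.

Lemma desc_shift m j : 1 < j < m -> braid_eq (desc m ++ [:: j]) (j.-1 :: desc m).
Proof.
elim: m j => [|m IH] j /andP[j1 jm] //; rewrite descS ?cat_cons; last by lia.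
have [jlt|jeq] : j < m \/ j = m by lia.
  rewrite IH ?j1 //; apply: (@braid_cat [:: m; j.-1] [:: j.-1; m]) => //.
  by apply/braid_sym/braid_far; lia.
subst j; case: m {IH jm} j1 => [|[|p]] // _; rewrite descS // cat_cons.
rewrite braid_commute //; last exact: all_far_is_gen (all_desc _) _.
by rewrite -[[:: p.+2, _, _ & _]]/([:: p.+2; p.+1; p.+2] ++ _) -braid_rel.
Qed.

Lemma half_twistS m : half_twist m.+1 = asc m ++ half_twist m.
Proof. by []. Qed.

Lemma half_twist_desc m : braid_eq (half_twist m.+1) (half_twist m ++ desc m.+1).
Proof.
elim: m => [|m IH] //.
rewrite [half_twist m.+2]half_twistS [in X in braid_eq _ X]half_twistS IH ascS.
rewrite (descS (m := m.+1)) //.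
have comm : braid_eq (half_twist m ++ [:: m.+1]) (m.+1 :: half_twist m).
  by apply: braid_commute => //; exact: all_far_is_gen (all_half_twist m) _.
by rewrite -[m.+1 :: desc m.+1]cat1s -!catA (catA (half_twist m)) comm.
Qed.

Lemma half_twist_conj m j : 0 < j < m ->
  braid_eq (half_twist m ++ [:: j]) ((m - j) :: half_twist m).
Proof.
elim: m j => [|m IH] j /andP[j0 jm] //.
have [jlt|jeq] : j < m \/ j = m by lia.
  rewrite half_twistS -catA IH ?j0 // -cat1s catA asc_shift; last by lia.
  by rewrite subSn.
subst j; case: m {jm} IH j0 => [|[|p]] // IH _.
rewrite subSnn {1}half_twist_desc -catA desc_shift ?ltnSn // -cat1s catA.
by rewrite (IH p.+1) ?ltnSn // subSnn cat_cons -half_twist_desc.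
Qed.

Lemma half_twist_conj_word m w : all (is_gen m) w ->
  braid_eq (half_twist m ++ w) (map (fun j => m - j) w ++ half_twist m).
Proof. by apply: braid_conj => j; apply: half_twist_conj. Qed.

(* [:: m+1-q; ...; m-1], the last q-1 letters of asc (m-1). *)
Definition upper_asc q m := iota (m.+1 - q) q.-1.

Lemma map_predn_iota a k : map predn (iota a.+1 k) = iota a k.
Proof. by elim: k a => [|k IH] a //=; rewrite IH. Qed.

Lemma upper_ascS q m : 0 < q < m ->
  upper_asc q.+1 m = map predn (upper_asc q m) ++ [:: m.-1].
Proof.
case: q => // q /andP[_ qm]; rewrite /upper_asc !succnK iota_rcons.
have -> : m.+1 - q.+1 = (m.+1 - q.+2).+1 by lia.
by rewrite map_predn_iota; congr (_ ++ [:: _]); lia.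
Qed.

Lemma map_reflect_upper_asc q m : q <= m ->
  map (fun j => m - j) (upper_asc q m) = desc q.
Proof.
elim: q => [|[|q] IH] qm //; rewrite descS // -IH; last by lia.
rewrite /upper_asc /=; have -> : (m.+1 - q.+2).+1 = m.+1 - q.+1 by lia.
by congr (_ :: _); lia.
Qed.

Definition desc_pow m q := iter q (cat (desc m)) [::].

Lemma desc_powS m q : desc_pow m q.+1 = desc m ++ desc_pow m q.
Proof. by []. Qed.

Lemma all_desc_pow m q : all (is_gen m) (desc_pow m q).
Proof. by elim: q => [|q IH] //; rewrite desc_powS all_cat all_desc. Qed.

Lemma desc_pow_upper m q : 0 < q <= m ->
  braid_eq (desc_pow m.+1 q) (upper_asc q m ++ m :: desc_pow m q).
Proof.
elim: q => [|[|q] IH] // /andP[_ qm].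
  by rewrite /upper_asc !desc_powS descS.
case: m qm IH => [|[|p]] // qm IH.
rewrite desc_powS IH ?qm; last by lia.
have lower : braid_eq (desc p.+3 ++ upper_asc q.+1 p.+2)
                      (map predn (upper_asc q.+1 p.+2) ++ desc p.+3).
  apply: (braid_conj (P := fun g => 1 < g < p.+3)) => [g|]; first exact: desc_shift.
  by apply/allP => g; rewrite mem_iota => /andP ?; lia.
rewrite catA lower -catA (upper_ascS (_ : 0 < q.+1 < p.+2)) //.
have comm : braid_eq (desc p.+1 ++ [:: p.+2]) (p.+2 :: desc p.+1).
  by apply: braid_commute => //; exact: all_far_is_gen (all_desc _) _.
rewrite (desc_powS _ q.+1) (descS (m := p.+2)) // (descS (m := p.+1)) // !cat_cons.
rewrite -[p.+2 :: desc_pow _ _]cat1s catA comm.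
rewrite -[[:: p.+2, p.+1, p.+2 & _]]/([:: p.+2; p.+1; p.+2] ++ _) -braid_rel //.
by rewrite -!catA.
Qed.

Fixpoint jm_word k :=
  match k with 0 | 1 => [::] | (p.+1 as k').+1 => k' :: jm_word k' ++ [:: k'] end.

Fixpoint jm_prod_word k := if k is p.+1 then jm_prod_word p ++ jm_word p.+1 else [::].

Lemma jm_word_desc_asc m : jm_word m.+1 = desc m.+1 ++ asc m.
Proof.
elim: m => [|m IH] //.
have -> : jm_word m.+2 = m.+1 :: jm_word m.+1 ++ [:: m.+1] by [].
by rewrite IH ascS (descS (m := m.+1)) // catA.
Qed.

Lemma jm_word_commute m w : all (is_gen m) w ->
  braid_eq (jm_word m.+1 ++ w) (w ++ jm_word m.+1).
Proof.
rewrite -[w in braid_eq _ (w ++ _)]map_id; apply: braid_conj => j /andP[j0 jm].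
rewrite jm_word_desc_asc -catA asc_shift ?j0 // -cat1s catA desc_shift //.
by apply/andP; split.
Qed.

Lemma half_twist_sqS m : braid_eq (half_twist m.+1 ++ half_twist m.+1)
                                  (half_twist m ++ half_twist m ++ jm_word m.+1).
Proof.
rewrite {1}half_twist_desc [half_twist m.+1]half_twistS -catA (catA (desc _)).
by rewrite -jm_word_desc_asc jm_word_commute ?all_half_twist.
Qed.

Lemma half_twist_sq m : braid_eq (half_twist m ++ half_twist m) (jm_prod_word m).
Proof. by elim: m => [|m IH] //=; rewrite half_twist_sqS catA IH. Qed.

Lemma desc_pow_full_twist m : braid_eq (desc_pow m m) (half_twist m ++ half_twist m).
Proof.
elim: m => [|[|p] IH] //.
rewrite desc_powS desc_pow_upper ?leqnn // IH /upper_asc subSnn succnK -/(asc p).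
rewrite -[p.+1 :: _]cat1s (catA (asc p)) -ascS catA -jm_word_desc_asc.
have gens : all (is_gen p.+1) (half_twist p.+1 ++ half_twist p.+1).
  by rewrite all_cat all_half_twist.
by rewrite (jm_word_commute gens) (half_twist_sqS p.+1) catA.
Qed.

Definition trace_word m p := half_twist p ++ half_twist m ++ desc_pow m p.

Lemma trace_word_split m p : 0 < m -> p < m ->
  exists w w', [/\ all (is_gen m) w, all (is_gen m) w',
                   braid_eq (trace_word m.+1 p) (w ++ m :: w')
                 & braid_eq (w ++ w') (trace_word m p.+1)].
Proof.
move=> m0 pm; exists (half_twist p ++ half_twist m ++ upper_asc p.+1 m), (desc_pow m p.+1).
have upper_gen : all (is_gen m) (upper_asc p.+1 m) by apply: all_iota_is_gen; lia.
split; [|exact: all_desc_pow| |].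
- by rewrite !all_cat all_half_twist upper_gen (all_is_gen_le (ltnW pm) (all_half_twist p)).
- by rewrite /trace_word half_twist_desc -!catA -desc_powS desc_pow_upper ?pm.
rewrite /trace_word -[X in braid_eq X _]catA (half_twist_conj_word upper_gen).
by rewrite (map_reflect_upper_asc pm) [in X in braid_eq _ X]half_twist_desc -!catA.
Qed.

Import GRing.Theory.
Local Open Scope ring_scope.

Section Operators.
Variables (R : realType) (n : nat).
Local Notation C := R[i].
Local Notation op := (op R n).
Local Notation idx := (idx n).

Lemma opP m (X Y : op m) : (forall i j, X i j = Y i j) -> X = Y.
Proof. by move=> XY; apply: funext => i; apply: funext => j; apply: XY. Qed.

Lemma opmulA m : associative (@opmul R n m).
Proof.
move=> X Y Z; apply: opP => i j; rewrite /opmul.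
under eq_bigr do rewrite big_distrr; rewrite exchange_big.
by apply: eq_bigr => l _; rewrite big_distrl; apply: eq_bigr => k _ /=; rewrite mulrA.
Qed.

Lemma op1mul m : left_id op1 (@opmul R n m).
Proof.
move=> X; apply: opP => i j; rewrite /opmul /op1 (bigD1 i) //= eqxx mul1r big1 ?addr0 //.
by move=> k; rewrite eq_sym => /negbTE ->; rewrite mul0r.
Qed.

Lemma opmul1 m : right_id op1 (@opmul R n m).
Proof.
move=> X; apply: opP => i j; rewrite /opmul /op1 (bigD1 j) //= eqxx mulr1 big1 ?addr0 //.
by move=> k /negbTE ->; rewrite mulr0.
Qed.

HB.instance Definition _ m := Monoid.isLaw.Build (op m) op1 (@opmul R n m)
  (@opmulA m) (@op1mul m) (@opmul1 m).

Lemma op0mul m (X : op m) : opmul op0 X = op0.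
Proof. by apply: opP => i j; rewrite /opmul big1 // => k _; rewrite mul0r. Qed.

Lemma opmul0 m (X : op m) : opmul X op0 = op0.
Proof. by apply: opP => i j; rewrite /opmul big1 // => k _; rewrite mulr0. Qed.

Lemma natrb_and (a b : bool) : (a && b)%:R = a%:R * b%:R :> C.
Proof. by case: a; rewrite ?mul1r ?mul0r. Qed.

Lemma natrb_mul (b : bool) (x : C) : b%:R * x = if b then x else 0.
Proof. by case: b; rewrite ?mul1r ?mul0r. Qed.

Section EmbedOp.
Variables (N k : nat) (f : 'I_k -> 'I_N).
Hypothesis f_inj : injective f.

Definition proj_idx (i : idx N) : idx k := [ffun t => i (f t)].
Definition off_image (c : 'I_N) := [forall t, f t != c].
Definition agree_off (i j : idx N) := [forall c, off_image c ==> (i c == j c)].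
Definition embed_op (X : op k) : op N := fun i j =>
  X (proj_idx i) (proj_idx j) * (agree_off i j)%:R.
Definition merge_idx (i : idx N) (l : idx k) : idx N :=
  [ffun c => if [pick t | f t == c] is Some t then l t else i c].

Lemma merge_idx_in i l t : merge_idx i l (f t) = l t.
Proof.
rewrite ffunE; case: pickP => [t' /eqP /f_inj -> //|no_t].
by have := no_t t; rewrite eqxx.
Qed.

Lemma merge_idx_out i l c : off_image c -> merge_idx i l c = i c.
Proof.
move=> /forallP off_c; rewrite ffunE; case: pickP => [t /eqP ftc|//].
by have := off_c t; rewrite ftc eqxx.
Qed.

Lemma off_imageP c : off_image c \/ exists t, c = f t.
Proof.
case off_c: (off_image c); [by left | right].
by move/negbT: off_c => /forallPn [t]; rewrite negbK => /eqP <-; exists t.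
Qed.

Lemma proj_merge_idx i l : proj_idx (merge_idx i l) = l.
Proof. by apply/ffunP => t; rewrite ffunE merge_idx_in. Qed.

Lemma agree_off_merge i l j : agree_off (merge_idx i l) j = agree_off i j.
Proof. by apply: eq_forallb => c; case off_c: (off_image c); rewrite //= merge_idx_out. Qed.

Lemma agree_offC i j : agree_off i j = agree_off j i.
Proof. by apply: eq_forallb => c; rewrite eq_sym. Qed.

Lemma agree_offii i : agree_off i i.
Proof. by apply/forallP => c; rewrite eqxx implybT. Qed.

Lemma agree_off_proj i j : (proj_idx i == proj_idx j) && agree_off i j = (i == j).
Proof.
apply/andP/eqP => [[/eqP ij_f /forallP ij_off]|->]; last by rewrite eqxx agree_offii.
apply/ffunP => c; case: (off_imageP c) => [off_c|[t ->]].
  by have := ij_off c; rewrite off_c => /eqP.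
by have := congr1 (fun l : idx k => l t) ij_f; rewrite !ffunE.
Qed.

Lemma sum_agree_off (i : idx N) (G : idx N -> C) :
  \sum_(j : idx N) (agree_off i j)%:R * G j = \sum_(l : idx k) G (merge_idx i l).
Proof.
under eq_bigr do rewrite natrb_mul; rewrite -big_mkcond (partition_big proj_idx xpredT) //=.
apply: eq_bigr => l _; apply: big_pred1 => j.
apply/andP/eqP => [[/forallP ij /eqP <-]|->]; last first.
  by rewrite agree_offC agree_off_merge agree_offii proj_merge_idx.
apply/ffunP => c; case: (off_imageP c) => [off_c|[t ->]].
  by rewrite merge_idx_out //; have := ij c; rewrite off_c => /eqP.
by rewrite merge_idx_in ffunE.
Qed.

Lemma embed_op_mul (X Y : op k) : embed_op (opmul X Y) = opmul (embed_op X) (embed_op Y).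
Proof.
apply: opP => i j; rewrite /embed_op /opmul.
transitivity (\sum_(l : idx N) (agree_off i l)%:R *
   (X (proj_idx i) (proj_idx l) * (Y (proj_idx l) (proj_idx j) * (agree_off l j)%:R))).
  rewrite sum_agree_off big_distrl; apply: eq_bigr => l _.
  by rewrite agree_off_merge proj_merge_idx mulrA.
by apply: eq_bigr => l _; rewrite !mulrA [_ * X _ _]mulrC.
Qed.

Lemma embed_op1 : embed_op op1 = op1.
Proof. by apply: opP => i j; rewrite /embed_op /op1 -natrb_and agree_off_proj. Qed.

End EmbedOp.

Lemma embed_op_comp N k k' (f : 'I_k -> 'I_N) (g : 'I_k' -> 'I_k) (X : op k') :
  injective f -> embed_op f (embed_op g X) = embed_op (f \o g) X.
Proof.
move=> f_inj; apply: opP => i j; rewrite /embed_op -mulrA -natrb_and.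
have proj_comp i' : proj_idx g (proj_idx f i') = proj_idx (f \o g) i'.
  by apply/ffunP => t; rewrite !ffunE.
rewrite !proj_comp; congr (_ * (nat_of_bool _)%:R).
apply/andP/forallP => [[/forallP ij_g /forallP ij_f] c|ij].
  apply/implyP => off_c; case: (off_imageP f c) => [off_fc|[s c_fs]].
    by have := ij_f c; rewrite off_fc.
  have off_gs : off_image g s.
    by apply/forallP => t; apply: contra_neq _ (forallP off_c t) => /= ->.
  by have := ij_g s; rewrite off_gs !ffunE c_fs.
split; apply/forallP => c; apply/implyP => off_c.
  rewrite !ffunE; apply: (implyP (ij (f c))); apply/forallP => t.
  exact: contra_neq (@f_inj _ _) (forallP off_c t).
by apply: (implyP (ij c)); apply/forallP => t; apply: (forallP off_c (g t)).
Qed.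

Section Disjoint.
Variables (N k k' : nat) (f : 'I_k -> 'I_N) (g : 'I_k' -> 'I_N).
Hypotheses (f_inj : injective f) (fg : forall t s, f t != g s).

Lemma proj_merge_disjoint i l : proj_idx g (merge_idx f i l) = proj_idx g i.
Proof. by apply/ffunP => t; rewrite ffunE [RHS]ffunE merge_idx_out //; apply/forallP => s. Qed.

Lemma agree_off_merge_disjoint i l j :
  agree_off g (merge_idx f i l) j =
  (l == proj_idx f j) && [forall c, off_image f c ==> off_image g c ==> (i c == j c)].
Proof.
apply/idP/andP => [/forallP ij|[/eqP -> /forallP ij]].
  split.
    apply/eqP/ffunP => t; rewrite ffunE -(merge_idx_in f_inj i l t); apply/eqP.
    by apply: (implyP (ij (f t))); apply/forallP => s; rewrite eq_sym.
  apply/forallP => c; apply/implyP => off_fc; apply/implyP => off_gc.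
  by have := implyP (ij c) off_gc; rewrite merge_idx_out.
apply/forallP => c; apply/implyP => off_gc; case: (off_imageP f c) => [off_fc|[t ->]].
  by rewrite merge_idx_out //; apply: (implyP (implyP (ij c) off_fc)).
by rewrite merge_idx_in // ffunE.
Qed.

Lemma opmul_embed_disjoint (X : op k) (Y : op k') i j :
  opmul (embed_op f X) (embed_op g Y) i j =
  X (proj_idx f i) (proj_idx f j) * Y (proj_idx g i) (proj_idx g j) *
  [forall c, off_image f c ==> off_image g c ==> (i c == j c)]%:R.
Proof.
rewrite /opmul /embed_op.
transitivity (\sum_(l : idx N) (agree_off f i l)%:R *
   (X (proj_idx f i) (proj_idx f l) * (Y (proj_idx g l) (proj_idx g j) * (agree_off g l j)%:R))).
  by apply: eq_bigr => l _; rewrite !mulrA [_%:R * X _ _]mulrC.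
rewrite sum_agree_off // (bigD1 (proj_idx f j)) //= big1 ?addr0 => [|l /negbTE l_j].
  by rewrite proj_merge_idx // proj_merge_disjoint agree_off_merge_disjoint eqxx !mulrA.
by rewrite agree_off_merge_disjoint l_j /= !mulr0.
Qed.

End Disjoint.

Lemma embed_op_comm N k k' (f : 'I_k -> 'I_N) (g : 'I_k' -> 'I_N) (X : op k) (Y : op k') :
    injective f -> injective g -> (forall t s, f t != g s) ->
  opmul (embed_op f X) (embed_op g Y) = opmul (embed_op g Y) (embed_op f X).
Proof.
move=> f_inj g_inj fg; apply: opP => i j.
have gf t s : g t != f s by rewrite eq_sym.
rewrite !opmul_embed_disjoint // [X _ _ * _]mulrC.
congr (_ * (nat_of_bool _)%:R); apply: eq_forallb => c.
by case: (off_image f c); case: (off_image g c).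
Qed.

Definition pair_ord m (a b : 'I_m) : 'I_2 -> 'I_m := fun t => if val t == 0%N then a else b.

Lemma pair_ord_inj m (a b : 'I_m) : a != b -> injective (pair_ord a b).
Proof.
move=> ab [[|[|t]] t2] [[|[|s]] s2] //= eq_ts; try exact: val_inj;
  by rewrite /pair_ord /= in eq_ts; rewrite eq_ts eqxx in ab.
Qed.

Lemma off_image_pair m (a b : 'I_m) c : off_image (pair_ord a b) c = (a != c) && (b != c).
Proof.
apply/forallP/andP => [ab_c|[a_c b_c] t]; first by split; [apply: (ab_c ord0) | apply: (ab_c o01)].
by rewrite /pair_ord; case: (val t == 0%N).
Qed.

Lemma embed2E m (X : op 2) (a b : 'I_m) : embed2 X a b = embed_op (pair_ord a b) X.
Proof.
apply: opP => i j; rewrite /embed2 /embed_op.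
have pairE i' : pair_idx i' a b = proj_idx (pair_ord a b) i'.
  by apply/ffunP => t; rewrite !ffunE /pair_ord; case: (val t == 0%N).
rewrite !pairE; congr (_ * (nat_of_bool _)%:R); apply: eq_forallb => c.
by rewrite off_image_pair ![c == _]eq_sym; case: (a != c); case: (b != c).
Qed.

Lemma embed1E m (Y : op 1) (a : 'I_m) : embed1 Y a = embed_op (fun=> a) Y.
Proof.
apply: opP => i j; rewrite /embed1 /embed_op; congr (_ * (nat_of_bool _)%:R).
apply: eq_forallb => c; rewrite eq_sym.
by congr (_ ==> _); apply/idP/forallP => [? t|/(_ ord0)].
Qed.

Local Notation wid := (widen_ord (leqnSn _)).

Lemma wid_inj m : injective (wid : 'I_m -> 'I_m.+1).
Proof. by move=> s t /(congr1 val) st; apply: val_inj. Qed.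

Definition lift_op m (X : op m) : op m.+1 := embed_op wid X.

Lemma lift_op_mul m (X Y : op m) : lift_op (opmul X Y) = opmul (lift_op X) (lift_op Y).
Proof. by rewrite /lift_op embed_op_mul //; apply: wid_inj. Qed.

Lemma lift_op1 m : lift_op (op1 : op m) = op1.
Proof. by rewrite /lift_op embed_op1 //; apply: wid_inj. Qed.

Section Braiding.
Variable Rm : op 2.

Lemma Rk_out N j : (N <= j)%N -> Rk Rm N j = op0.
Proof.
move=> Nj; rewrite /Rk /embedN; case: (insub j.-1) => // a.
by case: insubP => // b _ bj; have := ltn_ord b; rewrite bj ltnNge Nj.
Qed.

Lemma Rk_embed N j (a b : 'I_N) : val a = j.-1 -> val b = j ->
  Rk Rm N j = embed_op (pair_ord a b) Rm.
Proof.
move=> aj bj; rewrite /Rk /embedN -embed2E.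
case: insubP => [a' _ a'j|]; last by rewrite -aj ltn_ord.
case: insubP => [b' _ b'j|]; last by rewrite -bj ltn_ord.
by congr embed2; apply: val_inj; rewrite ?a'j ?b'j.
Qed.

Lemma comp_pair_ord m m' (g : 'I_m -> 'I_m') (a b : 'I_m) :
  g \o pair_ord a b = pair_ord (g a) (g b).
Proof. by apply: funext => t; rewrite /pair_ord /=; case: (val t == 0%N). Qed.

Lemma Rk_embed3 N j (g : 'I_3 -> 'I_N) : injective g -> (0 < j)%N ->
    (forall t, val (g t) = j.-1 + t)%N ->
  Rk Rm N j = embed_op g (Rk Rm 3 1) /\ Rk Rm N j.+1 = embed_op g (Rk Rm 3 2).
Proof.
move=> g_inj j0 gE; rewrite (@Rk_embed 3 1 ord0 o13) // (@Rk_embed 3 2 o13 ord_max) //.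
by rewrite !embed_op_comp // !comp_pair_ord; split; apply: Rk_embed; rewrite !gE /=; lia.
Qed.

Hypothesis braid3 : opmul (Rk Rm 3 1) (opmul (Rk Rm 3 2) (Rk Rm 3 1)) =
                    opmul (Rk Rm 3 2) (opmul (Rk Rm 3 1) (Rk Rm 3 2)).

Lemma Rk_braid N j : (0 < j)%N ->
  opmul (Rk Rm N j) (opmul (Rk Rm N j.+1) (Rk Rm N j)) =
  opmul (Rk Rm N j.+1) (opmul (Rk Rm N j) (Rk Rm N j.+1)).
Proof.
move=> j0; case: (ltnP j.+1 N) => [jN|Nj]; last by rewrite (Rk_out Nj) !op0mul opmul0.
case: N jN => // N jN; pose g (t : 'I_3) : 'I_N.+1 := inord (j.-1 + t).
have gE t : val (g t) = (j.-1 + t)%N by rewrite /g /= inordK //; have := ltn_ord t; lia.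
have g_inj : injective g by move=> t s /(congr1 val); rewrite !gE => /addnI /val_inj.
by have [-> ->] := Rk_embed3 g_inj j0 gE; rewrite -!embed_op_mul // braid3.
Qed.

Lemma Rk_comm N a b : (0 < a)%N -> (a.+1 < b)%N ->
  opmul (Rk Rm N a) (Rk Rm N b) = opmul (Rk Rm N b) (Rk Rm N a).
Proof.
move=> a0 ab; case: (ltnP b N) => [bN|Nb]; last by rewrite (Rk_out Nb) op0mul opmul0.
case: N bN => // N bN; have valE x : (x < N.+1)%N -> val (inord x : 'I_N.+1) = x.
  by move=> xN; rewrite /= inordK.
rewrite !(Rk_embed (valE _ _) (valE _ _)); try lia.
apply: embed_op_comm; try apply: pair_ord_inj; rewrite -?(inj_eq val_inj) ?valE; try lia.
move=> t s; rewrite -(inj_eq val_inj) /pair_ord.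
by case: (_ == 0%N); case: (_ == 0%N); rewrite !valE; lia.
Qed.

Definition word_op N (w : seq nat) : op N := \big[@opmul R n N/op1]_(j <- w) Rk Rm N j.
Arguments word_op : clear implicits.

Lemma word_op_cat N u v : word_op N (u ++ v) = opmul (word_op N u) (word_op N v).
Proof. exact: big_cat. Qed.

Lemma word_op_braid_eq N u v : braid_eq u v -> word_op N u = word_op N v.
Proof.
elim=> {u v} [w|u v _ ->|u v w _ -> _ ->|u u' v v' _ Hu _ Hv|j j0|a b a0 ab] //.
- by rewrite !word_op_cat Hu Hv.
- by rewrite /word_op !big_cons !big_nil !opmul1 Rk_braid.
- by rewrite /word_op !big_cons !big_nil !opmul1 Rk_comm.
Qed.

Lemma Rk_lift m j : (j < m)%N -> Rk Rm m.+1 j = lift_op (Rk Rm m j).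
Proof.
case: m => // m jm; have valE x : (x < m.+1)%N -> val (inord x : 'I_m.+1) = x.
  by move=> xm; rewrite /= inordK.
rewrite /lift_op (Rk_embed (valE _ _) (valE _ _)); try lia.
by rewrite embed_op_comp ?comp_pair_ord; [apply: Rk_embed; rewrite /= valE //; lia|apply: wid_inj].
Qed.

Lemma word_op_lift m w : all (is_gen m) w -> word_op m.+1 w = lift_op (word_op m w).
Proof.
elim: w => [|j w IH] /=; first by rewrite /word_op !big_nil lift_op1.
by case/andP=> /andP[_ jm] /IH; rewrite /word_op !big_cons => ->; rewrite Rk_lift // lift_op_mul.
Qed.

End Braiding.

Lemma lift_max m (c : 'I_m) : lift ord_max c = wid c.
Proof. by apply: val_inj; rewrite /= /bump leqNgt ltn_ord. Qed.

Lemma ord_maxP m (c : 'I_m.+1) : c = ord_max \/ exists c', c = wid c'.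
Proof.
by case: (unliftP ord_max c) => [c' ->|->]; [right; exists c'; rewrite lift_max | left].
Qed.

Lemma wid_neq_max m (c : 'I_m) : wid c != ord_max.
Proof. by rewrite -(inj_eq val_inj) /= neq_ltn ltn_ord. Qed.

Lemma ins_max_wid m (i : idx m) l t : ins ord_max i l (wid t) = i t.
Proof.
by rewrite ffunE -lift_max liftK.
Qed.

Lemma ins_max_max m (i : idx m) l : ins ord_max i l ord_max = l.
Proof. by rewrite ffunE unlift_none. Qed.

Lemma off_image_wid m (c : 'I_m.+1) : off_image wid c = (c == ord_max).
Proof.
apply/forallP/eqP => [off_c|-> t]; last exact: wid_neq_max.
by case: (ord_maxP c) => [//|[c' c_c']]; have := off_c c'; rewrite c_c' eqxx.
Qed.

Lemma proj_ins_max m (i : idx m) l : proj_idx wid (ins ord_max i l) = i.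
Proof. by apply/ffunP => t; rewrite ffunE ins_max_wid. Qed.

Lemma merge_ins_max m (i : idx m) l l' : merge_idx wid (ins ord_max i l) l' = ins ord_max l' l.
Proof.
apply/ffunP => c; case: (ord_maxP c) => [->|[c' ->]].
  by rewrite merge_idx_out ?off_image_wid // !ins_max_max.
by rewrite merge_idx_in ?ins_max_wid //; apply: wid_inj.
Qed.

Lemma ptr_lift_opl m (X : op m) (Z : op m.+1) :
  ptr ord_max (opmul (lift_op X) Z) = opmul X (ptr ord_max Z).
Proof.
apply: opP => i j; rewrite /ptr /opmul /lift_op /embed_op.
under eq_bigr => l _.
  under eq_bigr => k _ do rewrite proj_ins_max [X _ _ * _]mulrC -mulrA.
  rewrite (sum_agree_off (@wid_inj m)).
  under eq_bigr => l' _ do rewrite (proj_merge_idx (@wid_inj m)) merge_ins_max.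
  over.
by rewrite exchange_big; apply: eq_bigr => l' _; rewrite big_distrr.
Qed.

Lemma ptr_lift_opr m (X : op m) (Z : op m.+1) :
  ptr ord_max (opmul Z (lift_op X)) = opmul (ptr ord_max Z) X.
Proof.
apply: opP => i j; rewrite /ptr /opmul /lift_op /embed_op.
under eq_bigr => l _.
  under eq_bigr => k _ do rewrite proj_ins_max agree_offC mulrA [_ * _%:R]mulrC.
  rewrite (sum_agree_off (@wid_inj m)).
  under eq_bigr => l' _ do rewrite (proj_merge_idx (@wid_inj m)) merge_ins_max.
  over.
by rewrite exchange_big; apply: eq_bigr => l' _; rewrite big_distrl.
Qed.

Lemma embed1_max_lift_comm m (D : op 1) (X : op m) :
  opmul (embed1 D ord_max) (lift_op X) = opmul (lift_op X) (embed1 D ord_max).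
Proof.
rewrite embed1E /lift_op; apply: embed_op_comm; last 2 first.
- exact: wid_inj.
- by move=> t s; rewrite eq_sym wid_neq_max.
by move=> t s _; rewrite (ord1 t) (ord1 s).
Qed.

Lemma sum_idx1 (F : idx 1 -> C) : \sum_(l : idx 1) F l = \sum_(a : 'I_n) F [ffun=> a].
Proof.
rewrite (reindex (fun a : 'I_n => [ffun=> a] : idx 1)) //.
exists (fun l : idx 1 => l ord0) => [a _|l _]; first by rewrite ffunE.
by apply/ffunP => t; rewrite ffunE (ord1 t).
Qed.

Section LastFactor.
Variable m : nat.
Let last : 'I_1 -> 'I_m.+1 := fun=> ord_max.

Lemma last_inj : injective last.
Proof. by move=> t s _; rewrite (ord1 t) (ord1 s). Qed.

Lemma merge_last_ins (i : idx m) l (l' : idx 1) :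
  merge_idx last (ins ord_max i l) l' = ins ord_max i (l' ord0).
Proof.
apply/ffunP => c; case: (ord_maxP c) => [->|[c' ->]].
  by rewrite ins_max_max (merge_idx_in last_inj _ _ ord0).
by rewrite merge_idx_out ?ins_max_wid //; apply/forallP => t; rewrite eq_sym wid_neq_max.
Qed.

Lemma rtr_last_coord (D : op 1) (Y : op m.+1) i j :
  rtr_last D m Y i j =
  \sum_(l : 'I_n) \sum_(a : 'I_n) D [ffun=> l] [ffun=> a] * Y (ins ord_max i a) (ins ord_max j l).
Proof.
rewrite /rtr_last /ptr /opmul embed1E; apply: eq_bigr => l _.
have proj_last : proj_idx last (ins ord_max i l) = [ffun=> l].
  by apply/ffunP => t; rewrite ffunE [RHS]ffunE /last ins_max_max.
under eq_bigr do rewrite /embed_op proj_last [D _ _ * _]mulrC -mulrA.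
rewrite (sum_agree_off last_inj) sum_idx1; apply: eq_bigr => a _.
by rewrite (proj_merge_idx last_inj) merge_last_ins ffunE.
Qed.

Lemma off_image_last c : off_image last c = (ord_max != c).
Proof. by apply/forallP/idP => [/(_ ord0)|? t]. Qed.

Lemma proj_pair_ins (i : idx m.+1) a :
  proj_idx (pair_ord (wid ord_max) ord_max) (ins ord_max i a) = ins ord_max (proj_idx last i) a.
Proof.
apply/ffunP => t; rewrite ffunE /pair_ord; case: (ord_maxP t) => [->|[t' ->]] /=.
  by rewrite !ins_max_max.
by rewrite (ord1 t') !ins_max_wid ffunE.
Qed.

Lemma agree_pair_ins (i j : idx m.+1) a l :
  agree_off (pair_ord (wid ord_max) ord_max) (ins ord_max i a) (ins ord_max j l) =
  agree_off last i j.
Proof.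
apply/forallP/forallP => ij c; apply/implyP.
  rewrite off_image_last => c_max; have := ij (wid c).
  by rewrite off_image_pair !ins_max_wid (inj_eq (@wid_inj _)) c_max eq_sym wid_neq_max.
rewrite off_image_pair; case: (ord_maxP c) => [->|[c' ->]]; first by rewrite eqxx andbF.
rewrite !ins_max_wid (inj_eq (@wid_inj _)) => /andP[c_max _].
by have := ij c'; rewrite off_image_last c_max.
Qed.

End LastFactor.

Lemma rtr_last_Rk_last m (D : op 1) (Rm : op 2) : (0 < m)%N ->
  rtr_last D 1 Rm = op1 -> rtr_last D m (Rk Rm m.+1 m) = op1.
Proof.
case: m => // m _ DR1; rewrite (@Rk_embed _ _ _ (wid ord_max) ord_max) //.
apply: opP => i j; rewrite rtr_last_coord.
under eq_bigr => l _ do under eq_bigr => a _ do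
  rewrite /embed_op !proj_pair_ins agree_pair_ins mulrA.
under eq_bigr => l _ do rewrite -big_distrl.
by rewrite -big_distrl -rtr_last_coord DR1 /op1 /= -natrb_and agree_off_proj //; apply: last_inj.
Qed.

Lemma rtr_last_sandwich m (D : op 1) (Rm : op 2) (X Y : op m) : (0 < m)%N ->
    rtr_last D 1 Rm = op1 ->
  rtr_last D m (opmul (lift_op X) (opmul (Rk Rm m.+1 m) (lift_op Y))) = opmul X Y.
Proof.
move=> m0 DR1; rewrite /rtr_last opmulA embed1_max_lift_comm -opmulA ptr_lift_opl.
by rewrite opmulA ptr_lift_opr -/(rtr_last D m _) rtr_last_Rk_last // op1mul.
Qed.

Section SkewInverse.
Variables Rm Psi : op 2.

Definition idx2 (x y : 'I_n) : idx 2 := [ffun t : 'I_2 => if val t == 0%N then x else y].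
Definition idx3 (x y z : 'I_n) : idx 3 :=
  [ffun t : 'I_3 => if val t == 0%N then x else if val t == 1%N then y else z].

Lemma ins_idx1 (u : idx 1) t : ins ord_max u t = idx2 (u ord0) t.
Proof.
apply/ffunP => c; rewrite !ffunE; case: unliftP => [c' ->|->] //=.
by rewrite (ord1 c').
Qed.

Lemma ins_idx2 x y z : ins o13 (idx2 x z) y = idx3 x y z.
Proof.
apply/ffunP => c; rewrite !ffunE; case: unliftP => [c' ->|->] //=.
by case: c' => -[|[|c']] c'2 //=; rewrite ffunE.
Qed.

Lemma sum_idx2 (F : idx 2 -> C) :
  \sum_(l : idx 2) F l = \sum_(x : 'I_n) \sum_(y : 'I_n) F (idx2 x y).
Proof.
rewrite pair_big /= (reindex (fun p : 'I_n * 'I_n => idx2 p.1 p.2)) //.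
exists (fun l : idx 2 => (l ord0, l o01)) => [[x y] _|l _]; first by rewrite !ffunE.
by apply/ffunP => -[[|[|t]] t2] //; rewrite !ffunE //=; congr (l _); apply: val_inj.
Qed.

Local Notation p01 := (pair_ord (ord0 : 'I_3) o13).
Local Notation p12 := (pair_ord o13 (ord_max : 'I_3)).

Lemma proj01_idx3 x y z : proj_idx p01 (idx3 x y z) = idx2 x y.
Proof. by apply/ffunP => -[[|[|t]] t2]; rewrite !ffunE. Qed.

Lemma proj12_idx3 x y z : proj_idx p12 (idx3 x y z) = idx2 y z.
Proof. by apply/ffunP => -[[|[|t]] t2]; rewrite !ffunE. Qed.

Lemma p01_inj : injective p01. Proof. exact: pair_ord_inj. Qed.

Lemma merge01_idx3 x y z a b : merge_idx p01 (idx3 x y z) (idx2 a b) = idx3 a b z.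
Proof.
apply/ffunP => -[[|[|[|t]]] t3] //.
- by rewrite (_ : Ordinal t3 = p01 ord0) ?(merge_idx_in p01_inj) ?ffunE //; apply: val_inj.
- by rewrite (_ : Ordinal t3 = p01 o01) ?(merge_idx_in p01_inj) ?ffunE //; apply: val_inj.
by rewrite merge_idx_out ?off_image_pair ?ffunE.
Qed.

Lemma agree12_idx3 x y z x' y' z' : agree_off p12 (idx3 x y z) (idx3 x' y' z') = (x == x').
Proof.
apply/forallP/idP => [/(_ ord0)|xx' t]; first by rewrite off_image_pair !ffunE.
by rewrite off_image_pair; case: t => -[|[|[|t]]] t3 //=; rewrite !ffunE.
Qed.

Lemma skew_inverse_coord : ptr o13 (opmul (Rk Rm 3 1) (Rk Psi 3 2)) = flip ->
  forall x y z : 'I_n,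
  \sum_(b : 'I_n) \sum_(c : 'I_n) Rm (idx2 x b) (idx2 y c) * Psi (idx2 c z) (idx2 b z) =
  ((x == z) && (z == y))%:R.
Proof.
move=> skew x y z; have := congr1 (fun Y => Y (idx2 x z) (idx2 y z)) skew.
rewrite /flip !ffunE /= => <-; rewrite /ptr; apply: eq_bigr => b _.
rewrite (@Rk_embed _ _ _ ord0 o13) // (@Rk_embed _ _ _ o13 ord_max) // !ins_idx2 /opmul.
under [RHS]eq_bigr do rewrite /embed_op [Rm _ _ * _]mulrC -mulrA.
rewrite (sum_agree_off p01_inj) sum_idx2 [RHS](bigD1 y) //=.
rewrite [X in _ + X]big1 ?addr0 => [|a /negbTE ay].
  apply: eq_bigr => c _.
  by rewrite merge01_idx3 !proj01_idx3 !proj12_idx3 agree12_idx3 eqxx mulr1.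
by apply: big1 => c _; rewrite merge01_idx3 agree12_idx3 ay !mulr0.
Qed.

Lemma idx1_eq (u v : idx 1) : (u == v) = (u ord0 == v ord0).
Proof.
apply/eqP/eqP => [-> //|uv]; apply/ffunP => t.
by rewrite (ord1 t).
Qed.

Lemma rtr_last_skew : skew_inverse Rm Psi -> rtr_last (DR Psi) 1 Rm = op1.
Proof.
(* Expanding D_R = Tr_(2) Psi, the entry is a sum over s of entries of Tr_(2)(R_12 Psi_23). *)
case=> skew _; apply: opP => u v; rewrite rtr_last_coord /op1 idx1_eq.
have -> : (u ord0 == v ord0)%:R = \sum_(s : 'I_n) ((u ord0 == s) && (s == v ord0))%:R :> C.
  rewrite (bigD1 (u ord0)) //= eqxx big1 ?addr0 // => s.
  by rewrite eq_sym => /negbTE ->.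
under [RHS]eq_bigr do rewrite -(skew_inverse_coord skew).
rewrite /DR /ptr (_ : o01 = ord_max); last exact: val_inj.
under [LHS]eq_bigr do under eq_bigr do rewrite big_distrl.
rewrite [LHS]exchange_big; under [LHS]eq_bigr do rewrite exchange_big; rewrite [LHS]exchange_big.
apply: eq_bigr => s _; apply: eq_bigr => a _; apply: eq_bigr => l _.
by rewrite !ins_idx1 !ffunE mulrC.
Qed.

End SkewInverse.
End Operators.

Arguments word_op {R n} Rm N w.

Section Main.
Variables (R : realType) (n : nat) (Rm : op R n 2).

Lemma Ups_word N k : Ups Rm N k = word_op Rm N (half_twist k).
Proof.
elim: k => [|[|p] IH]; try by rewrite /word_op big_nil.
have -> : Ups Rm N p.+2 =
  opmul (\big[@opmul R n N/op1]_(1 <= j < p.+2) Rk Rm N j) (Ups Rm N p.+1) by [].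
by rewrite IH (half_twistS p.+1) word_op_cat /index_iota subSS subn0.
Qed.

Lemma Jop_word N k : Jop Rm N k = word_op Rm N (jm_word k).
Proof.
elim: k => [|[|p] IH]; try by rewrite /word_op big_nil.
have -> : Jop Rm N p.+2 = opmul (Rk Rm N p.+1) (opmul (Jop Rm N p.+1) (Rk Rm N p.+1)) by [].
rewrite (_ : jm_word p.+2 = [:: p.+1] ++ jm_word p.+1 ++ [:: p.+1]) //.
by rewrite IH !word_op_cat /word_op !big_seq1.
Qed.

Lemma Jprod_word N k : Jprod Rm N k = word_op Rm N (jm_prod_word k).
Proof.
elim: k => [|k IH]; first by rewrite /Jprod /word_op !big_nil.
rewrite /Jprod /index_iota !subSS !subn0 in IH *.
by rewrite iota_rcons big_cat IH big_seq1 Jop_word /= -word_op_cat.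
Qed.

Hypothesis braid3 : opmul (Rk Rm 3 1) (opmul (Rk Rm 3 2) (Rk Rm 3 1)) =
                    opmul (Rk Rm 3 2) (opmul (Rk Rm 3 1) (Rk Rm 3 2)).
Variable D : op R n 1.
Hypothesis rtr_R : rtr_last D 1 Rm = op1.

Lemma rtrs_trace_word k m p : (p + k <= m)%N -> (0 < m)%N ->
  rtrs D m k (word_op Rm (k + m) (trace_word (k + m) p)) = word_op Rm m (trace_word m (p + k)).
Proof.
elim: k p => [|k IH] p pkm m0; first by rewrite addn0.
have km0 : (0 < k + m)%N by lia.
have [|w [w' [gen_w gen_w' split merge]]] := trace_word_split km0 (_ : p < k + m)%N; first lia.
rewrite [rtrs _ _ _ _]/= (word_op_braid_eq braid3 _ split) word_op_cat.
rewrite /word_op big_cons -!/(word_op _ _ _).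
rewrite (word_op_lift _ gen_w) (word_op_lift _ gen_w') rtr_last_sandwich //.
by rewrite -word_op_cat (word_op_braid_eq braid3 _ merge) IH -?addSnnS //; lia.
Qed.

End Main.

Theorem lemmaB3 (R : realType) (n : nat) (Rm Psi : op R n 2) :
  is_Rmatrix Rm -> skew_inverse Rm Psi ->
  forall i : nat, (1 <= i)%N ->
    let U := Ups Rm i i in
    let U4 := opmul U (opmul U (opmul U U)) in
    rtrs (DR Psi) i i (Ups Rm (i + i) (i + i)) = U4 /\
    U4 = opmul (Jprod Rm i i) (Jprod Rm i i).
Proof.
move=> [_ braid3] /rtr_last_skew rtr_R i i1 U U4; rewrite /U4 /U !Ups_word -!word_op_cat.
split.
  rewrite (_ : half_twist (i + i) = trace_word (i + i) 0); last by rewrite /trace_word cats0.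
  rewrite rtrs_trace_word // add0n; apply: word_op_braid_eq => //.
  by rewrite /trace_word desc_pow_full_twist.
rewrite !Jprod_word -word_op_cat; apply: word_op_braid_eq => //.
by rewrite catA half_twist_sq.
Qed.
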